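(* Let $h,k$ be positive integers with $\gcd(h,k)=1$ and $h+k$ odd. Then $$Y_{1}(h,k)+Y_{1}(k,h)=2(k-1)B_{1}(h,k)+2(h-1)B_{1}(k,h).$$
   Context: $[x]$ denotes the greatest integer $\le x$. For coprime positive integers $a,b$ define $$B_{1}(a,b)=\sum_{j=1}^{b-1}(-1)^{j+\left[\frac{aj}{b}\right]}\left[\frac{aj}{b}\right],\qquad Y_{1}(a,b)=\sum_{j=1}^{b-1}(2j-1)(-1)^{j+\left[\frac{aj}{b}\right]}\left[\frac{aj}{b}\right].$$ *)

From mathcomp Require Import all_boot all_order all_algebra.
Set Implicit Arguments. Unset Strict Implicit. Unset Printing Implicit Defensive.
Import Order.TTheory GRing.Theory Num.Theory.
Local Open Scope ring_scope.

Definition B1 (a b : nat) : int :=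
  \sum_(1 <= j < b) (-1) ^+ (j + (a * j) %/ b)%N * ((a * j) %/ b)%:Z.

Definition Y1 (a b : nat) : int :=
  \sum_(1 <= j < b) (2 * j%:Z - 1) * (-1) ^+ (j + (a * j) %/ b)%N
                      * ((a * j) %/ b)%:Z.

From mathcomp Require Import all_boot all_order all_algebra.
From mathcomp Require Import zify ring.
Set Implicit Arguments. Unset Strict Implicit. Unset Printing Implicit Defensive.
Import Order.TTheory GRing.Theory Num.Theory.
Local Open Scope ring_scope.

(* Put q_j = [h j / k] and p_i = [k i / h].  As h and k are coprime, no lattice point (j, i)
   with 0 < i < h lies on the diagonal k i = h j, so [i <= q_j] and [j <= p_i] are complementary
   conditions on the rectangle [1, k) x [1, h).  Writing each horizontal step P(j, q_j) - P(j-1, q_j)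
   and each vertical step P(p_i, i) - P(p_i, i-1) of the staircase under the diagonal as a boundary
   term plus a sum of mixed second differences of P, the two families of mixed differences tile the
   rectangle, and for any P the steps add up to P(k-1, h-1) - P(0, 0).
   For P(x, y) = (-1)^(x+y) (x y + (1 - k) y) this value is 0, the horizontal steps sum to
   Y1(h,k) - 2(k-1) B1(h,k), and the vertical steps to Y1(k,h) + (1-k) sum_i (2i-1) s_i with
   s_i = (-1)^(i + p_i).  Since h + k is odd, the reflection i -> h - i, which sends p_i to
   k - 1 - p_i, preserves s_i; averaging over it gives 2 B1(k,h) = (k-1) sum_i s_i and
   sum_i (2i-1) s_i = (h-1) sum_i s_i, so the vertical steps sum to Y1(k,h) - 2(h-1) B1(k,h). *)

Lemma telescope_pred (V : zmodType) (u : nat -> V) n : (0 < n)%N ->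
  \sum_(1 <= j < n) (u j - u j.-1) = u n.-1 - u 0%N.
Proof. by move=> n_gt0; rewrite big_add1 telescope_sumr. Qed.

Lemma subrACA (V : zmodType) (a b c d : V) : (a - b) - (c - d) = (a - c) - (b - d).
Proof. by rewrite !opprB addrACA [RHS]addrACA (addrC (- b)). Qed.

Lemma ltn_mul_div a b j : (0 < a)%N -> (j < b)%N -> (a * j %/ b < a)%N.
Proof. by move=> a_gt0 j_lt; rewrite ltn_divLR ?ltn_pmul2l //; apply: leq_ltn_trans j_lt. Qed.

Lemma coprime_muln_neq h k i j :
  coprime h k -> (0 < i < h)%N -> (k * i != h * j)%N.
Proof.
move=> hk /andP[i_gt0 i_lt]; apply/eqP => eq_ki.
have : (h %| k * i)%N by rewrite eq_ki dvdn_mulr.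
by rewrite Gauss_dvdr // => /(dvdn_leq i_gt0); rewrite leqNgt i_lt.
Qed.

Lemma leq_div_diagonal h k i j : (0 < h)%N -> (0 < k)%N -> coprime h k ->
  (0 < i < h)%N -> (i <= h * j %/ k)%N = ~~ (j <= k * i %/ h)%N.
Proof.
move=> h_gt0 k_gt0 hk /(coprime_muln_neq j hk) ne.
by rewrite !leq_divRL // -ltnNge [(i * k)%N]mulnC [(j * h)%N]mulnC ltn_neqAle ne.
Qed.

Section Staircase.

Variables (V : zmodType) (h k : nat) (P : nat -> nat -> V).
Hypotheses (h_gt0 : (0 < h)%N) (k_gt0 : (0 < k)%N) (hk_coprime : coprime h k).

Let D j i := (P j i - P j.-1 i) - (P j i.-1 - P j.-1 i.-1).

Lemma column_diff j n :
  P j n - P j.-1 n = (P j 0 - P j.-1 0) + \sum_(1 <= i < n.+1) D j i.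
Proof. by rewrite (@telescope_pred _ (fun i => P j i - P j.-1 i)) //= subrKC. Qed.

Lemma row_diff m i :
  P m i - P m i.-1 = (P 0 i - P 0 i.-1) + \sum_(1 <= j < m.+1) D j i.
Proof.
rewrite (eq_bigr (fun j => (P j i - P j i.-1) - (P j.-1 i - P j.-1 i.-1))).
  by rewrite (@telescope_pred _ (fun j => P j i - P j i.-1)) //= subrKC.
by move=> j _; rewrite /D subrACA.
Qed.

Lemma staircase_sum :
  \sum_(1 <= j < k) (P j (h * j %/ k) - P j.-1 (h * j %/ k))
  + \sum_(1 <= i < h) (P (k * i %/ h) i - P (k * i %/ h) i.-1)
  = P k.-1 h.-1 - P 0 0.
Proof.
have horizontal : \sum_(1 <= j < k) (P j (h * j %/ k) - P j.-1 (h * j %/ k))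
    = (P k.-1 0 - P 0 0)
      + \sum_(1 <= j < k) \sum_(1 <= i < h | (i <= h * j %/ k)%N) D j i.
  rewrite -(@telescope_pred _ (fun j => P j 0)) // -big_split.
  apply: eq_big_nat => j /andP[_ j_lt].
  rewrite column_diff (big_nat_widen _ _ _ _ _ (ltn_mul_div h_gt0 j_lt)).
  by congr (_ + _); apply: eq_bigl => i; rewrite ltnS.
have vertical : \sum_(1 <= i < h) (P (k * i %/ h) i - P (k * i %/ h) i.-1)
    = (P 0 h.-1 - P 0 0)
      + \sum_(1 <= j < k) \sum_(1 <= i < h | ~~ (i <= h * j %/ k)%N) D j i.
  under [X in _ = _ + X]eq_bigr do rewrite big_mkcond.
  rewrite exchange_big_nat /= -(@telescope_pred _ (fun i => P 0 i)) // -big_split.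
  apply: eq_big_nat => i /andP[i_gt0 i_lt].
  rewrite row_diff (big_nat_widen _ _ _ _ _ (ltn_mul_div k_gt0 i_lt)) big_mkcond.
  by congr (_ + _); apply: eq_bigr => j _; rewrite leq_div_diagonal ?i_gt0 // negbK ltnS.
have rectangle : \sum_(1 <= j < k) \sum_(1 <= i < h) D j i
    = (P k.-1 h.-1 - P 0 h.-1) - (P k.-1 0 - P 0 0).
  transitivity (\sum_(1 <= j < k) ((P j h.-1 - P j.-1 h.-1) - (P j 0 - P j.-1 0))).
    by apply: eq_bigr => j _; rewrite column_diff prednK // addrC addKr.
  by rewrite sumrB !(@telescope_pred _ (fun j => P j _)).
rewrite horizontal vertical addrACA -big_split /=.
rewrite (eq_bigr (fun j => \sum_(1 <= i < h) D j i)); last first.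
  by move=> j _; rewrite [RHS](bigID (fun i => i <= h * j %/ k)%N).
by rewrite rectangle -addrA addrCA subrKC addrC subrKA.
Qed.

End Staircase.

Definition floor_sign (a b j : nat) : int := (-1) ^+ (j + a * j %/ b)%N.

Definition sign_sum (a b : nat) : int := \sum_(1 <= j < b) floor_sign a b j.

Section Reflection.

Variables a b : nat.
Hypotheses (a_gt0 : (0 < a)%N) (b_gt0 : (0 < b)%N) (ab_coprime : coprime a b).
Hypothesis ab_odd : odd (a + b).

Lemma floor_reflect j : (0 < j < b)%N -> (a * (b - j) %/ b = a - 1 - a * j %/ b)%N.
Proof.
move=> /andP[j_gt0 j_lt].
have r_gt0 : (0 < a * j %% b)%N.
  rewrite lt0n -/(dvdn b (a * j)) Gauss_dvdr 1?coprime_sym //.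
  by apply: contraTN j_lt => /(dvdn_leq j_gt0); rewrite -leqNgt.
have r_lt : (a * j %% b < b)%N by rewrite ltn_pmod.
have q_lt := ltn_mul_div a_gt0 j_lt.
have decomp : (a * (b - j) = (a - 1 - a * j %/ b) * b + (b - a * j %% b))%N.
  have qb_le : (a * j %/ b * b + b <= a * b)%N.
    by rewrite -mulSnr leq_mul2r q_lt orbT.
  rewrite mulnBr !mulnBl mul1n; move: (divn_eq (a * j) b) qb_le r_lt.
  move: (a * j %/ b)%N (a * j %% b)%N => q r.
  by move: (a * j)%N (a * b)%N => aj ab; lia.
have rest_lt : (b - a * j %% b < b)%N by rewrite ltn_subrL b_gt0 r_gt0.
by rewrite decomp divnMDl // (divn_small rest_lt) addn0.
Qed.

Lemma floor_sign_reflect j : (0 < j < b)%N -> floor_sign a b (b - j) = floor_sign a b j.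
Proof.
move=> j_range; have /andP[_ j_lt] := j_range.
rewrite /floor_sign floor_reflect // -signr_odd -[RHS]signr_odd.
have q_lt := ltn_mul_div a_gt0 j_lt.
have -> : (b - j + (a - 1 - a * j %/ b) = (a + b).-1 - (j + a * j %/ b))%N by lia.
rewrite oddB; last by lia.
by rewrite -subn1 oddB ?ab_odd //; lia.
Qed.

Lemma sum_floor_sign_reflect (F : nat -> int) :
  \sum_(1 <= j < b) floor_sign a b j * F j
  = \sum_(1 <= j < b) floor_sign a b j * F (b - j)%N.
Proof.
rewrite big_nat_rev; apply: eq_big_nat => j j_range.
by rewrite add1n subSS floor_sign_reflect.
Qed.

Lemma B1_reflect : 2 * B1 a b = (a%:Z - 1) * sign_sum a b.
Proof.
rewrite mulr_natl mulr2n {2}/B1 (sum_floor_sign_reflect (fun j => (a * j %/ b)%:Z)).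
rewrite /B1 -big_split /sign_sum mulr_sumr; apply: eq_big_nat => j j_range.
have /andP[_ j_lt] := j_range; have q_lt := ltn_mul_div a_gt0 j_lt.
rewrite /= floor_reflect // -!subzn //; last by lia.
rewrite /floor_sign; ring.
Qed.

Lemma weighted_sign_sum_reflect :
  \sum_(1 <= j < b) floor_sign a b j * (2 * j%:Z - 1) = (b%:Z - 1) * sign_sum a b.
Proof.
apply: (@mulfI _ 2) => //.
rewrite [LHS]mulr_natl mulr2n.
rewrite {2}(sum_floor_sign_reflect (fun j => 2 * j%:Z - 1)) -big_split.
rewrite /sign_sum !mulr_sumr; apply: eq_big_nat => j /andP[_ j_lt].
by rewrite /= -subzn ?(ltnW j_lt) //; ring.
Qed.

End Reflection.

Definition staircase_potential (k x y : nat) : int :=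
  (-1) ^+ (x + y) * (x%:Z * y%:Z + (1 - k%:Z) * y%:Z).

Lemma staircase_potential_diffl k x y : (0 < x)%N ->
  staircase_potential k x y - staircase_potential k x.-1 y
  = (-1) ^+ (x + y) * ((2 * x%:Z - 1) * y%:Z - 2 * (k%:Z - 1) * y%:Z).
Proof.
by case: x => // x _; rewrite /staircase_potential /= addSn exprS -[x.+1]addn1 PoszD; ring.
Qed.

Lemma staircase_potential_diffr k x y : (0 < y)%N ->
  staircase_potential k x y - staircase_potential k x y.-1
  = (-1) ^+ (y + x) * ((2 * y%:Z - 1) * x%:Z + (1 - k%:Z) * (2 * y%:Z - 1)).
Proof.
case: y => // y _.
by rewrite /staircase_potential /= addnS addnC exprS -[y.+1]addn1 PoszD; ring.
Qed.

Theorem theorem16 (h k : nat) :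
  (0 < h)%N -> (0 < k)%N -> coprime h k -> odd (h + k) ->
  Y1 h k + Y1 k h = 2 * (k%:Z - 1) * B1 h k + 2 * (h%:Z - 1) * B1 k h.
Proof.
move=> h_gt0 k_gt0 hk_coprime hk_odd.
have kh_coprime : coprime k h by rewrite coprime_sym.
have kh_odd : odd (k + h) by rewrite addnC.
have := staircase_sum (staircase_potential k) h_gt0 k_gt0 hk_coprime.
have -> : staircase_potential k k.-1 h.-1 - staircase_potential k 0 0 = 0.
  by rewrite /staircase_potential !predn_int //; ring.
have -> : \sum_(1 <= j < k) (staircase_potential k j (h * j %/ k)
                             - staircase_potential k j.-1 (h * j %/ k))
          = Y1 h k - 2 * (k%:Z - 1) * B1 h k.
  rewrite /Y1 /B1 mulr_sumr -sumrB; apply: eq_big_nat => j /andP[j_gt0 _].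
  by rewrite staircase_potential_diffl //; ring.
have -> : \sum_(1 <= i < h) (staircase_potential k (k * i %/ h) i
                             - staircase_potential k (k * i %/ h) i.-1)
          = Y1 k h - 2 * (h%:Z - 1) * B1 k h.
  rewrite -mulrA mulrCA B1_reflect // mulrCA -weighted_sign_sum_reflect //.
  rewrite /Y1 mulr_sumr -sumrB; apply: eq_big_nat => i /andP[i_gt0 _].
  by rewrite staircase_potential_diffr // /floor_sign; ring.
move=> balance; apply/eqP; rewrite -subr_eq0 -balance; apply/eqP; ring.
Qed.
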